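(* Let $d \geq 2$ and $n_1,\dots,n_d \geq 1$ be integers, and let $G_1$ and $G_2$ be graphs each having at least one edge. Then $K_{n_1,\dots,n_d}$ is isomorphic to a subgraph of $G_1\times G_2$ if and only if there exist positive integers $a_1,\dots,a_d,b_1,\dots,b_d$ such that $K_{a_1,\dots,a_d}$ is isomorphic to a subgraph of $G_1$, $K_{b_1,\dots,b_d}$ is isomorphic to a subgraph of $G_2$, and $n_i \leq a_ib_i$ for all $i\in\{1,\dots,d\}$.
   Context: The direct product $G_1 \times G_2$ has vertex set $V(G_1)\times V(G_2)$, with $(a,v)(b,u)$ an edge iff $ab\in E(G_1)$ and $uv\in E(G_2)$. $K_{n_1,\dots,n_d}$ denotes the complete $d$-partite graph with parts of sizes $n_1,\dots,n_d$. *)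

From mathcomp Require Import all_boot.
Set Implicit Arguments. Unset Strict Implicit. Unset Printing Implicit Defensive.

Definition simple_graph (T : finType) (e : rel T) : Prop :=
  symmetric e /\ irreflexive e.

Definition has_edge (T : finType) (e : rel T) : Prop :=
  exists x y, e x y.

Definition direct_prod (T1 T2 : finType) (e1 : rel T1) (e2 : rel T2)
  : rel (T1 * T2) :=
  fun p q => e1 p.1 q.1 && e2 p.2 q.2.

(* Vertex set of K_{n_1,...,n_d}: pairs (i, j) with i < d (the part) and
   j < n_i; two vertices are adjacent iff they lie in different parts. *)
Definition Kvert (d : nat) (n : 'I_d -> nat) : finType :=
  {i : 'I_d & 'I_(n i)}.

Definition Kedge (d : nat) (n : 'I_d -> nat) : rel (Kvert n) :=
  fun x y => tag x != tag y.

Definition contains_Kmulti (T : finType) (e : rel T) (d : nat) (n : 'I_d -> nat)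
  : Prop :=
  exists f : Kvert n -> T,
    injective f /\ forall x y : Kvert n, Kedge x y -> e (f x) (f y).

From mathcomp Require Import all_boot.
Set Implicit Arguments. Unset Strict Implicit. Unset Printing Implicit Defensive.

(* If K_n embeds into G1 x G2, the two projections of the i-th part have sizes
   a_i and b_i with n_i <= a_i b_i, and, as distinct parts remain adjacent and
   graphs are loopless, the projected parts span K_a in G1 and K_b in G2.
   Conversely, K_a in G1 and K_b in G2 give K_n in G1 x G2 by sending the j-th
   vertex of part i to the pair of the (j / b_i)-th and (j mod b_i)-th
   vertices of part i in the two factors. *)

Section PartImages.

Variables (d : nat) (n : 'I_d -> nat) (T : finType) (e : rel T).
Variable g : Kvert n -> T.
Hypothesis g_hom : forall x y : Kvert n, Kedge x y -> e (g x) (g y).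

Definition part_image (i : 'I_d) : {set T} :=
  [set g (Tagged (fun i => 'I_(n i)) j) | j : 'I_(n i)].

Lemma part_image_adj i i' z z' :
  i != i' -> z \in part_image i -> z' \in part_image i' -> e z z'.
Proof. by move=> ne /imsetP [j _ ->] /imsetP [j' _ ->]; apply: g_hom. Qed.

Lemma part_image_card_gt0 i : 0 < n i -> 0 < #|part_image i|.
Proof.
move=> n_gt0; apply/card_gt0P.
by exists (g (Tagged (fun i => 'I_(n i)) (Ordinal n_gt0))); apply: imset_f.
Qed.

Hypothesis e_irr : irreflexive e.

Lemma contains_Kmulti_part_images :
  contains_Kmulti e (fun i => #|part_image i|).
Proof.
pose h (x : Kvert (fun i => #|part_image i|)) := enum_val (tagged x).
have h_edge x y : Kedge x y -> e (h x) (h y).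
  by move=> ne; apply: part_image_adj ne (enum_valP _) (enum_valP _).
exists h; split=> // -[i k] [i' k'] /= hE.
have [ei|ne] := eqVneq i i'.
  by subst i'; rewrite /h /= in hE; rewrite (enum_val_inj hE).
by move: (h_edge (existT _ i k) (existT _ i' k') ne); rewrite hE e_irr.
Qed.

End PartImages.

Lemma part_image_card_le_mul (d : nat) (n : 'I_d -> nat)
    (T1 T2 : finType) (f : Kvert n -> T1 * T2) i :
  injective f ->
  n i <= #|part_image (fun x => (f x).1) i| * #|part_image (fun x => (f x).2) i|.
Proof.
move=> f_inj; rewrite -cardsX.
pose F (j : 'I_(n i)) := f (Tagged (fun i => 'I_(n i)) j).
have F_inj : injective F by move=> j j' /f_inj; apply: eq_from_Tagged.
rewrite -[n i]card_ord -(card_imset (mem 'I_(n i)) F_inj).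
apply/subset_leq_card/subsetP => _ /imsetP [j _ ->].
by rewrite [F j]surjective_pairing in_setX; apply/andP; split; apply: imset_f.
Qed.

Lemma contains_Kmulti_direct_prod (d : nat) (n a b : 'I_d -> nat)
    (T1 T2 : finType) (e1 : rel T1) (e2 : rel T2) :
  contains_Kmulti e1 a -> contains_Kmulti e2 b ->
  (forall i, n i <= a i * b i) ->
  contains_Kmulti (direct_prod e1 e2) n.
Proof.
move=> [f1 [f1_inj f1_hom]] [f2 [f2_inj f2_hom]] n_le.
have j_lt i (j : 'I_(n i)) : j < a i * b i := leq_trans (ltn_ord j) (n_le i).
have b_gt0 i (j : 'I_(n i)) : 0 < b i.
  by have := leq_ltn_trans (leq0n j) (j_lt i j); rewrite muln_gt0 => /andP [].
have quo_lt i (j : 'I_(n i)) : j %/ b i < a i by rewrite ltn_divLR ?b_gt0.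
have rem_lt i (j : 'I_(n i)) : j %% b i < b i by rewrite ltn_pmod ?b_gt0.
pose quo (x : Kvert n) : Kvert a :=
  Tagged (fun i => 'I_(a i)) (Ordinal (quo_lt (tag x) (tagged x))).
pose rem (x : Kvert n) : Kvert b :=
  Tagged (fun i => 'I_(b i)) (Ordinal (rem_lt (tag x) (tagged x))).
exists (fun x => (f1 (quo x), f2 (rem x))); split; last first.
  by move=> x y xy; apply/andP; split; [apply: f1_hom | apply: f2_hom].
move=> [i j] [i' j'] [/f1_inj quoE /f2_inj remE].
have ei : i = i' by have := congr1 tag quoE.
subst i'; congr Tagged; apply: val_inj => /=.
have /= := congr1 val (eq_from_Tagged quoE).
have /= := congr1 val (eq_from_Tagged remE).
by move=> rE qE; rewrite (divn_eq j (b i)) qE rE -divn_eq.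
Qed.

Theorem mainTheorem2 (d : nat) (n : 'I_d -> nat)
  (T1 T2 : finType) (e1 : rel T1) (e2 : rel T2) :
  2 <= d ->
  (forall i, 1 <= n i) ->
  simple_graph e1 -> simple_graph e2 ->
  has_edge e1 -> has_edge e2 ->
  (contains_Kmulti (direct_prod e1 e2) n <->
   exists a b : 'I_d -> nat,
     [/\ forall i, 0 < a i, forall i, 0 < b i,
         contains_Kmulti e1 a, contains_Kmulti e2 b &
         forall i, n i <= a i * b i]).
Proof.
move=> _ n_gt0 [_ e1_irr] [_ e2_irr] _ _; split; last first.
  by move=> [a [b [_ _ Ka Kb n_le]]]; apply: contains_Kmulti_direct_prod Ka Kb n_le.
move=> [f [f_inj f_hom]].
pose g1 x := (f x).1; pose g2 x := (f x).2.
have g1_hom x y : Kedge x y -> e1 (g1 x) (g1 y) by move/f_hom/andP => [].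
have g2_hom x y : Kedge x y -> e2 (g2 x) (g2 y) by move/f_hom/andP => [].
exists (fun i => #|part_image g1 i|), (fun i => #|part_image g2 i|); split.
- by move=> i; apply: part_image_card_gt0.
- by move=> i; apply: part_image_card_gt0.
- exact: contains_Kmulti_part_images.
- exact: contains_Kmulti_part_images.
- by move=> i; apply: part_image_card_le_mul.
Qed.
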